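(* Let $N\geq1$, $k\in\{1,\dots,N\}$ and for $i\in\{1,\dots,N\}$ let \[ v_i=\left(1-\frac{i-1}{N}\right)^k-\left(1-\frac{i}{N}\right)^k. \] Then for all integers $d\geq1$, \[ \sum_{i=1}^N v_i\left(\frac{i}{N+1}\right)^{1/d}\leq 2e\,k^{-1/d}. \] *)

From Stdlib Require Import Reals.
Open Scope R_scope.

Definition vcoef (N k i : nat) : R :=
  (1 - (INR i - 1) / INR N) ^ k - (1 - INR i / INR N) ^ k.

From Stdlib Require Import Reals Lra Lia.
Open Scope R_scope.

(* The weights v_i are the point masses of the minimum M of k independent
   uniform draws from {1, ..., N}, with P(M > j) = (1 - j/N)^k.  Since
   x |-> x^(1/d) is concave, its tangent line at a = 2/(k+1) bounds the sum by
   a^(1/d) as soon as E[M/(N+1)] <= a.  By summation by parts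
   E[M] = sum_(j<N) (1 - j/N)^k, which is at most 1 + N/(k+1) by comparison with
   int_0^N (1 - x/N)^k dx, and k <= N turns this into the bound on the mean.
   Finally (2/(k+1))^(1/d) <= 2^(1/d) k^(-1/d) <= 2 k^(-1/d). *)

Lemma sum_f_1_S (n : nat) (f : nat -> R) :
  sum_f 1 (S n) f = sum_f_R0 (fun j => f (S j)) n.
Proof.
  unfold sum_f; replace (S n - 1)%nat with n by lia.
  apply sum_eq; intros j _; now rewrite Nat.add_1_r.
Qed.

Lemma sum_f_R0_telescope (g : nat -> R) (n : nat) :
  sum_f_R0 (fun j => g j - g (S j)) n = g O - g (S n).
Proof. induction n as [|n IH]; simpl; [ring | rewrite IH; ring]. Qed.

Lemma sum_f_R0_telescope_mul_succ (g : nat -> R) (n : nat) :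
  sum_f_R0 (fun j => (g j - g (S j)) * INR (S j)) n
  = sum_f_R0 g n - INR (S n) * g (S n).
Proof.
  induction n as [|n IH]; [simpl; ring|].
  rewrite !tech5, IH, !S_INR; ring.
Qed.

Lemma weighted_sum_le_of_tangent (f : R -> R) (w x : nat -> R) (n : nat) (a c : R) :
  (forall j, (j <= n)%nat -> 0 <= w j) ->
  (forall j, (j <= n)%nat -> f (x j) <= f a + c * (x j - a)) ->
  sum_f_R0 w n = 1 -> 0 <= c -> sum_f_R0 (fun j => w j * x j) n <= a ->
  sum_f_R0 (fun j => w j * f (x j)) n <= f a.
Proof.
  intros Hw Htangent Hmass Hc Hmean.
  assert (Hlinear : sum_f_R0 (fun j => w j * (f a + c * (x j - a))) n
                    = (f a - c * a) * sum_f_R0 w n + c * sum_f_R0 (fun j => w j * x j) n).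
  { clear Hw Htangent Hmass Hmean.
    induction n as [|n IH]; simpl; [ring | rewrite IH; ring]. }
  apply Rle_trans with (sum_f_R0 (fun j => w j * (f a + c * (x j - a))) n).
  - apply sum_Rle; intros j Hj; apply Rmult_le_compat_l; auto.
  - rewrite Hlinear, Hmass.
    assert (c * sum_f_R0 (fun j => w j * x j) n <= c * a) by (apply Rmult_le_compat_l; auto).
    lra.
Qed.

Lemma ln_le_sub_1 (x : R) : 0 < x -> ln x <= x - 1.
Proof. intros Hx; generalize (exp_ineq1_le (ln x)); rewrite exp_ln; lra. Qed.

Lemma exp_le_exp_of_le (x y : R) : x <= y -> exp x <= exp y.
Proof. intros [Hlt | ->]; [left; apply exp_increasing | right]; auto. Qed.

Lemma Rpower_le_bernoulli (t s : R) : 0 < t -> 0 <= s <= 1 ->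
  Rpower t s <= 1 + s * (t - 1).
Proof.
  intros Ht Hs.
  set (u := s * t + 1 - s).
  assert (Hu : 0 < u) by (unfold u; nra).
  (* concavity of ln: combine ln y <= y - 1 at y = t/u and y = 1/u with weights s, 1 - s *)
  assert (Ht_u := ln_le_sub_1 (t * / u) ltac:(apply Rdiv_lt_0_compat; auto)).
  assert (H1_u := ln_le_sub_1 (/ u) ltac:(apply Rinv_0_lt_compat; auto)).
  rewrite ln_mult, ln_Rinv in Ht_u by (auto; apply Rinv_0_lt_compat; auto).
  rewrite ln_Rinv in H1_u by auto.
  assert (Hzero : s * (t * / u - 1) + (1 - s) * (/ u - 1) = 0) by (unfold u in *; field; lra).
  replace (1 + s * (t - 1)) with (exp (ln u)) by (rewrite exp_ln; unfold u; auto; ring).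
  apply exp_le_exp_of_le; nra.
Qed.

Lemma Rpower_le_tangent (x a s : R) : 0 < x -> 0 < a -> 0 <= s <= 1 ->
  Rpower x s <= Rpower a s + s * Rpower a s / a * (x - a).
Proof.
  intros Hx Ha Hs.
  replace (Rpower x s) with (Rpower a s * Rpower (x / a) s)
    by (rewrite Rpower_mult_distr by (auto; apply Rdiv_lt_0_compat; auto); f_equal; field; lra).
  assert (Hpos : 0 < Rpower a s) by apply exp_pos.
  apply Rle_trans with (Rpower a s * (1 + s * (x / a - 1))).
  - apply Rmult_le_compat_l; [lra | apply Rpower_le_bernoulli; auto].
    apply Rdiv_lt_0_compat; auto.
  - right; field; lra.
Qed.

Lemma pow_succ_sub_pow_ge (y h : R) (n : nat) : 0 <= y -> 0 <= h ->
  INR (S n) * h * y ^ n <= (y + h) ^ S n - y ^ S n.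
Proof.
  intros Hy Hh; induction n as [|n IH]; [simpl; lra|].
  assert (0 <= y ^ n) by (apply pow_le; auto).
  assert (Hstep : (y + h) * (y ^ S n + INR (S n) * h * y ^ n) <= (y + h) ^ S (S n))
    by (change ((y + h) ^ S (S n)) with ((y + h) * (y + h) ^ S n);
        apply Rmult_le_compat_l; lra).
  rewrite !S_INR in *; cbn [pow] in *.
  assert (0 <= (INR n + 1) * (h * h * y ^ n)) by (apply Rmult_le_pos; [generalize (pos_INR n); lra | apply Rmult_le_pos; [nra | auto]]).
  nra.
Qed.

Definition min_tail (N k j : nat) : R := (1 - INR j / INR N) ^ k.

Section MinimumOfUniformDraws.

Variable N : nat.
Hypothesis HN : (1 <= N)%nat.

Let HNpos : 0 < INR N.
Proof. apply lt_0_INR; lia. Qed.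

Lemma one_sub_div_nonneg (j : nat) : (j <= N)%nat -> 0 <= 1 - INR j / INR N.
Proof.
  intros Hj; assert (INR j <= INR N) by (apply le_INR; auto).
  assert (INR j / INR N <= 1) by (apply Rmult_le_reg_r with (INR N); auto; field_simplify; lra).
  lra.
Qed.

Lemma min_tail_0 (k : nat) : min_tail N k 0 = 1.
Proof. unfold min_tail; simpl; replace (1 - 0 / INR N) with 1 by (field; lra); apply pow1. Qed.

Lemma min_tail_N (k : nat) : (1 <= k)%nat -> min_tail N k N = 0.
Proof.
  intros Hk; unfold min_tail.
  replace (1 - INR N / INR N) with 0 by (field; lra); apply pow_i; lia.
Qed.

Lemma min_tail_nonneg (k j : nat) : (j <= N)%nat -> 0 <= min_tail N k j.
Proof. intros Hj; apply pow_le, one_sub_div_nonneg; auto. Qed.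

Lemma vcoef_S (k j : nat) : vcoef N k (S j) = min_tail N k j - min_tail N k (S j).
Proof.
  unfold vcoef, min_tail; rewrite S_INR.
  replace (INR j + 1 - 1) with (INR j) by ring; now rewrite <- S_INR.
Qed.

Lemma vcoef_S_nonneg (k j : nat) : (S j <= N)%nat -> 0 <= vcoef N k (S j).
Proof.
  intros Hj; rewrite vcoef_S; unfold min_tail.
  assert (Hlow : 0 <= 1 - INR (S j) / INR N) by (apply one_sub_div_nonneg; auto).
  assert (Hup : 1 - INR (S j) / INR N <= 1 - INR j / INR N)
    by (rewrite S_INR; unfold Rdiv; generalize (Rinv_0_lt_compat _ HNpos); nra).
  assert (Hpow := pow_incr _ _ k (conj Hlow Hup)); lra.
Qed.

Lemma min_tail_S_le (k j : nat) : (S j <= N)%nat ->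
  min_tail N k (S j) <= INR N / INR (S k) * (min_tail N (S k) j - min_tail N (S k) (S j)).
Proof.
  intros Hj; unfold min_tail.
  set (y := 1 - INR (S j) / INR N).
  replace (1 - INR j / INR N) with (y + / INR N) by (unfold y; rewrite S_INR; field; lra).
  assert (Hk : 0 < INR (S k)) by (apply lt_0_INR; lia).
  assert (Hbern := pow_succ_sub_pow_ge y (/ INR N) k (one_sub_div_nonneg _ Hj)
                     ltac:(left; apply Rinv_0_lt_compat; auto)).
  apply Rmult_le_compat_l with (r := INR N / INR (S k)) in Hbern;
    [| left; apply Rdiv_lt_0_compat; auto].
  replace (INR N / INR (S k) * (INR (S k) * / INR N * y ^ k)) with (y ^ k) in Hbern
    by (field; lra).
  exact Hbern.
Qed.

Lemma sum_min_tail_le (k : nat) :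
  sum_f_R0 (min_tail N k) (pred N) <= 1 + INR N / INR (S k).
Proof.
  assert (Hscale : 0 < INR N / INR (S k)) by (apply Rdiv_lt_0_compat; [exact HNpos | apply lt_0_INR; lia]).
  destruct (pred N) as [|m] eqn:Hpred.
  - cbn [sum_f_R0]; rewrite min_tail_0; lra.
  - rewrite decomp_sum, min_tail_0 by lia; simpl pred.
    apply Rplus_le_compat_l.
    apply Rle_trans with
      (sum_f_R0 (fun j => (min_tail N (S k) j - min_tail N (S k) (S j)) * (INR N / INR (S k))) m).
    + apply sum_Rle; intros j Hj; rewrite Rmult_comm; apply min_tail_S_le; lia.
    + rewrite <- scal_sum, sum_f_R0_telescope, min_tail_0.
      assert (0 <= min_tail N (S k) (S m)) by (apply min_tail_nonneg; lia).
      nra.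
Qed.

End MinimumOfUniformDraws.

Lemma sum_vcoef (n k : nat) : (1 <= k)%nat ->
  sum_f_R0 (fun j => vcoef (S n) k (S j)) n = 1.
Proof.
  intros Hk.
  rewrite (sum_eq _ (fun j => min_tail (S n) k j - min_tail (S n) k (S j)))
    by (intros; apply vcoef_S; lia).
  rewrite sum_f_R0_telescope, min_tail_0, min_tail_N by lia; ring.
Qed.

Lemma mean_vcoef_le (n k : nat) : (1 <= k)%nat -> (k <= S n)%nat ->
  sum_f_R0 (fun j => vcoef (S n) k (S j) * (INR (S j) / INR (S n + 1))) n
  <= 2 / INR (S k).
Proof.
  intros Hk1 HkN.
  set (N := S n).
  assert (HN1 : INR (N + 1) = INR N + 1) by (rewrite plus_INR; simpl; ring).
  assert (HkNr : INR k <= INR N) by (apply le_INR; auto).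
  assert (Hk : 1 <= INR k) by (apply (le_INR 1); auto).
  rewrite (sum_eq _ (fun j => (min_tail N k j - min_tail N k (S j)) * INR (S j) * / INR (N + 1)))
    by (intros; rewrite vcoef_S by (unfold N; lia); unfold Rdiv; ring).
  rewrite <- scal_sum, sum_f_R0_telescope_mul_succ, min_tail_N, HN1 by (unfold N; lia).
  assert (Hsum := sum_min_tail_le N ltac:(unfold N; lia) k); simpl pred in Hsum.
  rewrite (S_INR k) in *.
  apply Rle_trans with (/ (INR N + 1) * (1 + INR N / (INR k + 1))).
  - apply Rmult_le_compat_l; [left; apply Rinv_0_lt_compat; lra | lra].
  - assert (Hgap : 2 / (INR k + 1) - / (INR N + 1) * (1 + INR N / (INR k + 1))
                   = (INR N + 1 - INR k) * / ((INR k + 1) * (INR N + 1))) by (field; lra).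
    assert (0 <= (INR N + 1 - INR k) * / ((INR k + 1) * (INR N + 1)))
      by (apply Rle_mult_inv_pos; nra).
    lra.
Qed.

Lemma Rpower_two_div_succ_le (k : nat) (s : R) : (1 <= k)%nat -> 0 <= s <= 1 ->
  Rpower (2 / INR (S k)) s <= 2 * Rpower (INR k) (- s).
Proof.
  intros Hk Hs.
  assert (Hkr : 1 <= INR k) by (apply (le_INR 1); auto).
  rewrite S_INR.
  apply Rle_trans with (Rpower (2 * / INR k) s).
  - apply Rle_Rpower_l; [lra|]; split.
    + apply Rdiv_lt_0_compat; lra.
    + unfold Rdiv; apply Rmult_le_compat_l; [lra|]; apply Rinv_le_contravar; lra.
  - rewrite <- Rpower_mult_distr by (auto; lra || (apply Rinv_0_lt_compat; lra)).
    replace (Rpower (/ INR k) s) with (Rpower (INR k) (- s))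
      by (unfold Rpower; rewrite ln_Rinv by lra; f_equal; ring).
    apply Rmult_le_compat_r; [left; apply exp_pos|].
    rewrite <- (Rpower_1 2) at 2 by lra; apply Rle_Rpower; lra.
Qed.

Theorem lemma3p2 (N k d : nat) (hN : (1 <= N)%nat) (hk1 : (1 <= k)%nat)
  (hkN : (k <= N)%nat) (hd : (1 <= d)%nat) :
  sum_f 1 N (fun i => vcoef N k i * Rpower (INR i / INR (N + 1)) (1 / INR d))
  <= 2 * exp 1 * Rpower (INR k) (- (1 / INR d)).
Proof.
  destruct N as [|n]; [lia|].
  set (s := 1 / INR d).
  assert (Hs : 0 <= s <= 1).
  { assert (1 <= INR d) by (apply (le_INR 1); auto).
    unfold s; split; [apply Rle_mult_inv_pos; lra|].
    apply Rmult_le_reg_r with (INR d); [lra|]; field_simplify; lra. }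
  set (a := 2 / INR (S k)).
  assert (Ha : 0 < a) by (apply Rdiv_lt_0_compat; [lra | apply lt_0_INR; lia]).
  rewrite sum_f_1_S.
  apply Rle_trans with (Rpower a s).
  - apply (weighted_sum_le_of_tangent (fun x => Rpower x s) (fun j => vcoef (S n) k (S j))
             (fun j => INR (S j) / INR (S n + 1)) n a (s * Rpower a s / a)).
    + intros j Hj; apply vcoef_S_nonneg; lia.
    + intros j _; apply Rpower_le_tangent; auto.
      apply Rdiv_lt_0_compat; apply lt_0_INR; lia.
    + apply sum_vcoef; auto.
    + apply Rle_mult_inv_pos; auto; apply Rmult_le_pos; [lra | left; apply exp_pos].
    + apply mean_vcoef_le; auto.
  - apply Rle_trans with (2 * Rpower (INR k) (- s)); [apply Rpower_two_div_succ_le; auto|].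
    assert (1 <= exp 1) by (generalize (exp_ineq1_le 1); lra).
    assert (0 < Rpower (INR k) (- s)) by apply exp_pos.
    nra.
Qed.
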